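(* Let $G=(V,E)$ be a finite, connected, simple, undirected, unweighted graph and $i\sim j$ an edge with $d_i\le d_j$. Let $\Omega_j=\sharp_\Delta(i,j)\cup\{j\}$. If $\mathrm{Ric}(i,j)\le-2+\delta$ for some $0<\delta<(1+\gamma_{\max}(i,j))^{-1}$, then $$\frac{1}{|\Omega_j|}\sum_{k\in\Omega_j}b(k)\ \ge\ \delta^{-1}.$$
   Context: Betweenness centrality: $b(k)=\sum_{s,t\in V,\ s\ne t,\ s\ne k,\ t\ne k}\sigma_{st}(k)/\sigma_{st}$, where $\sigma_{st}$ is the number of shortest paths from $s$ to $t$ and $\sigma_{st}(k)$ the number of those passing through $k$. For an edge $i\sim j$ with degrees $d_i,d_j$ and neighbour sets $S_1(\cdot)$: $\sharp_\Delta=S_1(i)\cap S_1(j)$; $\sharp_\square^i=\{k\in S_1(i)\setminus (S_1(j)\cup\{j\}) : \exists\, w\in (S_1(k)\cap S_1(j))\setminus (S_1(i)\cup\{i\})\}$, $\sharp_\square^j$ symmetric; $\gamma_{\max}=\max\big\{\max_{k\in\sharp_\square^i}|(S_1(k)\cap S_1(j))\setminus(S_1(i)\cup\{i\})|,\ \max_{w\in\sharp_\square^j}|(S_1(w)\cap S_1(i))\setminus(S_1(j)\cup\{j\})|\big\}$, with $\gamma_{\max}=0$ if $\sharp_\square^i=\emptyset$. $\mathrm{Ric}(i,j)=0$ if $\min\{d_i,d_j\}=1$, otherwise $\mathrm{Ric}(i,j)=\frac{2}{d_i}+\frac{2}{d_j}-2+\frac{2|\sharp_\Delta|}{\max\{d_i,d_j\}}+\frac{|\sharp_\Delta|}{\min\{d_i,d_j\}}+\frac{\gamma_{\max}^{-1}}{\max\{d_i,d_j\}}(|\sharp_\square^i|+|\sharp_\square^j|)$,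 the last term being $0$ when $\sharp_\square^i=\emptyset$. *)

From HB Require Import structures.
From mathcomp Require Import all_boot all_order all_algebra.
Set Implicit Arguments. Unset Strict Implicit. Unset Printing Implicit Defensive.
Import Order.TTheory GRing.Theory Num.Theory.

Section Graph.
Variable V : finType.
Variable e : rel V.

Definition walks (n : nat) (s t : V) : {set n.-tuple V} :=
  [set p : n.-tuple V | path e s p && (last s p == t)].

(* Graph distance: least n < #|V| admitting a walk of length n
   (in a connected graph such an n always exists). *)
Definition gdist (s t : V) : nat :=
  find (fun n => [exists p : n.-tuple V, p \in walks n s t]) (iota 0 #|V|).

Definition sigma (s t : V) : nat := #|walks (gdist s t) s t|.

(* sigma_st(k): number of shortest paths from s to t through k
   (k is visited by the path; used only for k <> s, k <> t). *)
Definition sigma_via (s t k : V) : nat :=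
  #|[set p in walks (gdist s t) s t | k \in (tval p)]|.

Open Scope ring_scope.

Definition betweenness (R : fieldType) (k : V) : R :=
  \sum_(s : V | s != k) \sum_(t : V | (t != s) && (t != k))
     ((sigma_via s t k)%:R / (sigma s t)%:R).

Close Scope ring_scope.

Definition S1 (x : V) : {set V} := [set y | e x y].
Definition deg (x : V) : nat := #|S1 x|.

Definition tri (i j : V) : {set V} := S1 i :&: S1 j.

Definition sqwit (i j k : V) : {set V} :=
  (S1 k :&: S1 j) :\: (S1 i :|: [set i]).

Definition sq (i j : V) : {set V} :=
  [set k in S1 i :\: (S1 j :|: [set j]) | sqwit i j k != set0].

Definition gamma_max (i j : V) : nat :=
  maxn (\max_(k in sq i j) #|sqwit i j k|) (\max_(w in sq j i) #|sqwit j i w|).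

Open Scope ring_scope.

Definition Ric (R : fieldType) (i j : V) : R :=
  if minn (deg i) (deg j) == 1%N then 0 else
  let di := (deg i)%:R in let dj := (deg j)%:R in
  let dmax := (maxn (deg i) (deg j))%:R in
  let dmin := (minn (deg i) (deg j))%:R in
  let t := (#|tri i j|)%:R in
  2 / di + 2 / dj - 2 + 2 * t / dmax + t / dmin
  + (if sq i j == set0 then 0
     else ((gamma_max i j)%:R)^-1 / dmax * ((#|sq i j|)%:R + (#|sq j i|)%:R)).

Close Scope ring_scope.
End Graph.

From mathcomp Require Import all_boot all_order all_algebra.
From mathcomp Require Import ring lra zify.

(* A neighbour w of j outside the closed neighbourhood of i is at distance 2
   from i, and the shortest paths from i to w are the paths i - y - w through
   common neighbours y. Those with y in Omega = #_Delta(i,j) + {j} contribute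
   |Omega /\ S1 w| / |S1 i /\ S1 w| to the total betweenness of Omega; the
   remaining common neighbours are the square witnesses of w, so this ratio is
   1 unless w lies in #_square^j, where it is still at least 1/(1 + gamma_max).
   On the other side, Ric(i,j) <= -2 + delta says that deg j is large compared
   with |Omega| and with the number of squares; as the neighbours of j are i,
   #_Delta and the vertices w above, the two estimates combine to the claim. *)
Import Order.TTheory GRing.Theory Num.Theory.
Set Implicit Arguments. Unset Strict Implicit.

Section DistanceTwo.
Variables (V : finType) (e : rel V).
Hypotheses (e_sym : symmetric e) (e_irr : irreflexive e).
Variables (s t : V).
Hypotheses (neq_st : s != t) (nadj_st : ~~ e s t)
           (common_st : S1 e s :&: S1 e t != set0).

Let walk2 (x : V) : 2.-tuple V := [tuple x; t].

Let walk2_inj : injective walk2.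
Proof. by move=> x y /(congr1 val) [->]. Qed.

Lemma walks2E : walks e 2 s t = walk2 @: (S1 e s :&: S1 e t).
Proof.
apply/setP => p; rewrite inE; apply/idP/imsetP.
- case: p => [[|x [|y [|]]] //= sz]; rewrite andbT => /andP[/andP[ex ey] /eqP yt].
  by subst y; exists x; [rewrite !inE ex e_sym | apply: val_inj].
- by case=> x; rewrite !inE => /andP[ex ext] ->; rewrite /= ex e_sym ext /=.
Qed.

Lemma gdist_eq2 : gdist e s t = 2.
Proof.
have [x] := set0Pn _ common_st; rewrite !inE => /andP[esx etx].
have three_vertices : 2 < #|V|.
  apply: leq_trans (max_card [set s; x; t]).
  have nsx : s != x by apply: contraTneq esx => <-; rewrite e_irr.
  have nxt : x != t by apply: contraTneq etx => ->; rewrite e_irr.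
  by rewrite -setUA cardsU1 cards2 !inE negb_or nsx neq_st nxt.
rewrite /gdist; case: #|V| three_vertices => [|[|[|n]]] //= _.
have -> : [exists p : 0.-tuple V, p \in walks e 0 s t] = false.
  apply/negbTE/existsP => -[p]; rewrite inE tuple0 /=.
  by move/eqP=> st; move: neq_st; rewrite st eqxx.
have -> : [exists p : 1.-tuple V, p \in walks e 1 s t] = false.
  apply/negbTE/existsP => -[[[|y [|]]] //= sz].
  by rewrite inE /= andbT => /andP[esy /eqP yt]; move: nadj_st; rewrite -yt esy.
suff -> : [exists p : 2.-tuple V, p \in walks e 2 s t] by [].
by apply/existsP; exists (walk2 x); rewrite walks2E imset_f // !inE esx etx.
Qed.

Lemma sigma_eq2 : sigma e s t = #|S1 e s :&: S1 e t|.
Proof. by rewrite /sigma gdist_eq2 walks2E card_imset. Qed.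

Lemma sigma_via_eq2 k : k != t -> sigma_via e s t k = (k \in S1 e s :&: S1 e t).
Proof.
move=> neq_kt; rewrite /sigma_via gdist_eq2 walks2E.
have -> : [set p in walk2 @: (S1 e s :&: S1 e t) | k \in tval p] =
          walk2 @: (S1 e s :&: S1 e t :&: [set k]).
  apply/setP => p; rewrite inE; apply/andP/imsetP.
  - case=> /imsetP[y sy ->]; rewrite /= !inE (negbTE neq_kt) orbF => /eqP ->.
    by exists y => //; rewrite in_setI sy set11.
  - case=> y /setIP[sy /set1P <-] ->.
    by split; [exact: imset_f | rewrite !inE eqxx].
rewrite card_imset; last exact: walk2_inj.
case: (boolP (k \in _)) => k_in.
  by rewrite (setIidPr _) ?cards1 // sub1set.
by rewrite setIC disjoint_setI0 ?cards0 // disjoints1.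
Qed.

Lemma sum_sigma_via_eq2 (Om : {set V}) : Om \subset S1 e s ->
  (\sum_(k in Om) sigma_via e s t k = #|Om :&: S1 e t|)%N.
Proof.
move=> /subsetP Om_s.
have via k : k \in Om -> sigma_via e s t k = (k \in S1 e t).
  move=> Omk; rewrite sigma_via_eq2 ?in_setI ?Om_s //.
  by apply: contraTneq (Om_s k Omk) => ->; rewrite inE.
rewrite -sum1_card (big_setID (S1 e t)) /= [X in (_ + X)%N]big1 ?addn0 => [|k].
  by apply: eq_bigr => k /setIP[Omk tk]; rewrite via ?tk.
by case/setDP=> Omk ntk; rewrite via ?(negbTE ntk).
Qed.

End DistanceTwo.

Local Open Scope ring_scope.

Lemma ler_sum_sub (R : numDomainType) (I : finType) (A : {set I}) (P : pred I)
    (F : I -> R) :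
  (forall x, x \in A -> P x) -> (forall x, 0 <= F x) ->
  \sum_(x in A) F x <= \sum_(x | P x) F x.
Proof.
move=> sAP F_ge0; rewrite big_mkcond [leRHS]big_mkcond; apply: ler_sum => x _.
by case: ifP => [/sAP/= -> // | _]; case: ifP.
Qed.

Lemma sum_betweenness_ge (R : realFieldType) (V : finType) (e : rel V)
    (e_sym : symmetric e) (e_irr : irreflexive e) (s : V) (Om A : {set V}) :
  Om \subset S1 e s ->
  (forall t, t \in A -> [&& s != t, ~~ e s t & S1 e s :&: S1 e t != set0]) ->
  \sum_(t in A) ((#|Om :&: S1 e t|)%:R / (#|S1 e s :&: S1 e t|)%:R)
    <= \sum_(k in Om) betweenness e R k.
Proof.
move=> /subsetP sOm hA.
pose ratio t k : R := (sigma_via e s t k)%:R / (sigma e s t)%:R.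
have row k : k \in Om -> \sum_(t in A) ratio t k <= betweenness e R k.
  move=> /sOm; rewrite inE => esk.
  have nsk : s != k by apply: contraTneq esk => <-; rewrite e_irr.
  rewrite /betweenness [leRHS](bigD1 s) //= -[leLHS]addr0 lerD ?sumr_ge0 //.
    apply: ler_sum_sub => [t /hA/and3P[nst nest _] | t]; last exact: divr_ge0.
    by rewrite eq_sym nst; apply: contraNneq nest => ->.
  by move=> u _; apply: sumr_ge0 => t _; apply: divr_ge0.
apply: le_trans (ler_sum _ row); rewrite exchange_big /=.
apply: ler_sum => t /hA/and3P[nst nest common].
by rewrite -mulr_suml -natr_sum sum_sigma_via_eq2 // ?sigma_eq2 //; apply/subsetP.
Qed.

Lemma inv1Sn_le_ratio (R : numFieldType) (a b g : nat) : (0 < a)%N -> (b <= g)%N ->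
  (1 + g%:R)^-1 <= a%:R / (a + b)%:R :> R.
Proof.
move=> a_gt0 le_bg; have ab_gt0 : (0 < a + b)%N by rewrite addn_gt0 a_gt0.
rewrite ler_pdivlMr ?ltr0n // mulrC ler_pdivrMr ?ltr_wpDr ?ler0n //.
by rewrite nat1r -natrM ler_nat; nia.
Qed.

(* The curvature budget of [Ric_ge], with [deg j = U + X + T + 1], set against
   the betweenness lower bound [X / (1 + G) + U] of [sum_betweenness_Omega_ge]. *)
Lemma budget_bound (R : realFieldType) (d G X U T : R) :
  0 < d -> d * (1 + G) < 1 -> 0 <= G -> (0 < X -> 1 <= G) ->
  0 <= X -> 0 <= U -> 0 <= T ->
  2 * (T + 1) + X / G <= d * (U + X + T + 1) ->
  T + 1 <= d * (X / (1 + G) + U).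
Proof.
move=> d_gt0 dG G_ge0 XG X_ge0 U_ge0 T_ge0 hD.
have dT : d * (T + 1) <= T + 1 by nra.
have [X0|X_neq0] := eqVneq X 0; first by move: hD; rewrite X0 !mul0r add0r addr0; nra.
have G_ge1 : 1 <= G by apply: XG; rewrite lt_def X_neq0 X_ge0.
have ha : X / (1 + G) * (1 + G) = X by rewrite divfK //; apply/lt0r_neq0; lra.
have hb : X / G * G = X by rewrite divfK //; apply/lt0r_neq0; lra.
have a_ge0 : 0 <= X / (1 + G) by rewrite divr_ge0 //; lra.
move: (X / (1 + G)) (X / G) ha hb a_ge0 hD => a b ha hb a_ge0 hD.
have dG2 : d * G * G <= 1 + G by nra.
have h1 : d * a * G * G <= b * G by rewrite hb -ha; nra.
have h2 : d * a * G <= b by rewrite -(ler_pM2r (_ : 0 < G)); lra.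
by rewrite -ha in hD; nra.
Qed.

Section Edge.
Variables (V : finType) (e : rel V).
Hypotheses (e_sym : symmetric e) (e_irr : irreflexive e).
Variables (i j : V).
Hypothesis hij : e i j.

Local Notation Omega := (tri e i j :|: [set j]).
Local Notation far := (S1 e j :\: (S1 e i :|: [set i])).

Lemma Omega_sub : Omega \subset S1 e i.
Proof. by apply/subsetP => k; rewrite !inE => /orP[/andP[] | /eqP ->]. Qed.

Lemma far_dist2 w : w \in far ->
  [&& i != w, ~~ e i w & S1 e i :&: S1 e w != set0].
Proof.
rewrite !inE negb_or => /andP[/andP[eiw niw] ejw].
by rewrite eq_sym niw eiw; apply/set0Pn; exists j; rewrite !inE hij e_sym.
Qed.

Lemma card_S1I_split w :
  #|S1 e i :&: S1 e w| = (#|Omega :&: S1 e w| + #|sqwit e j i w|)%N.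
Proof.
rewrite -(cardsID Omega); congr (_ + _)%N; apply: eq_card => y; rewrite !inE.
  by case: eqVneq => [->|_]; rewrite ?hij ?orbT ?orbF /= ?andbT //;
    case: (e i y); case: (e j y); case: (e w y).
by case: (e i y); case: (e j y); case: (e w y); case: (y == j).
Qed.

Lemma sqwit_le_gamma_max w : w \in sq e j i -> (#|sqwit e j i w| <= gamma_max e i j)%N.
Proof.
move=> wsq; apply: leq_trans (leq_maxr _ _).
exact: (@leq_bigmax_cond _ [in sq e j i] (fun w => #|sqwit e j i w|) w wsq).
Qed.

Lemma gamma_max_gt0 : sq e j i != set0 -> (0 < gamma_max e i j)%N.
Proof.
case/set0Pn=> w wsq; apply: leq_trans (sqwit_le_gamma_max wsq).
by move: wsq; rewrite inE card_gt0 => /andP[].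
Qed.

Lemma sq_eq0_sym : sq e i j = set0 -> sq e j i = set0.
Proof.
move=> sq0; apply/eqP; rewrite -subset0; apply/subsetP => w.
rewrite !inE negb_or => /andP[/andP[/andP[niw wi] ejw]] /set0Pn[k].
rewrite !inE negb_or => /andP[/andP[njk kj] /andP[ewk eik]].
suff : k \in sq e i j by rewrite sq0 inE.
rewrite !inE negb_or njk kj eik; apply/set0Pn; exists w.
by rewrite !inE negb_or niw wi e_sym ewk ejw.
Qed.

Lemma sq_sub_far : sq e j i \subset far.
Proof. by apply/subsetP => w; rewrite inE => /andP[]. Qed.

Lemma deg_split : deg e j =
  (#|far :\: sq e j i| + #|sq e j i| + #|tri e i j| + 1)%N.
Proof.
rewrite /deg -(cardsID (S1 e i :|: [set i])) -(cardsID (sq e j i) far).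
rewrite (setIidPr sq_sub_far).
suff -> : S1 e j :&: (S1 e i :|: [set i]) = i |: tri e i j.
  by rewrite cardsU1 !inE e_irr /=; lia.
apply/setP => y; rewrite !inE; have [->|_] := eqVneq y i.
  by rewrite orbT /= andbT (e_sym j).
by rewrite orbF /= andbC.
Qed.

Lemma Ric_ge (R : realFieldType) : (deg e i <= deg e j)%N -> deg e i != 1%N ->
  (2 * (#|tri e i j|%:R + 1) + #|sq e j i|%:R / (gamma_max e i j)%:R)
    / (deg e j)%:R - 2 <= Ric e R i j.
Proof.
move=> hdeg ndeg1; rewrite /Ric (minn_idPl hdeg) (maxn_idPr hdeg) (negbTE ndeg1) /=.
set T : R := #|tri e i j|%:R; set X : R := #|sq e j i|%:R.
set G : R := (gamma_max e i j)%:R; set Di : R := (deg e i)%:R; set Dj : R := (deg e j)%:R.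
have sq_term : X / G / Dj <=
    (if sq e i j == set0 then 0 else G^-1 / Dj * (#|sq e i j|%:R + X)).
  case: ifP => [/eqP/sq_eq0_sym X0 | _]; first by rewrite /X X0 cards0 !mul0r.
  have -> : X / G / Dj = G^-1 / Dj * X by ring.
  by rewrite ler_wpM2l ?lerDr // divr_ge0 ?invr_ge0.
have Di_terms : 0 <= 2 / Di + T / Di by rewrite addr_ge0 ?divr_ge0.
move: sq_term; set S := (if _ then _ else _) => sq_term.
rewrite -subr_ge0.
have -> : 2 / Di + 2 / Dj - 2 + 2 * T / Dj + T / Di + S
    - ((2 * (T + 1) + X / G) / Dj - 2) = (2 / Di + T / Di) + (S - X / G / Dj) by ring.
by rewrite addr_ge0 // subr_ge0.
Qed.

Lemma far_ratio_ge (R : realFieldType) w g : w \in far ->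
  (#|sqwit e j i w| <= g)%N ->
  (1 + g%:R)^-1 <= #|Omega :&: S1 e w|%:R / #|S1 e i :&: S1 e w|%:R :> R.
Proof.
move=> /setDP[]; rewrite inE => ejw _ le_g.
rewrite card_S1I_split inv1Sn_le_ratio // card_gt0.
by apply/set0Pn; exists j; rewrite !inE eqxx orbT e_sym ejw.
Qed.

Lemma sum_betweenness_Omega_ge (R : realFieldType) :
  #|sq e j i|%:R / (1 + (gamma_max e i j)%:R) + #|far :\: sq e j i|%:R
    <= \sum_(k in Omega) betweenness e R k.
Proof.
apply: le_trans (sum_betweenness_ge R e_sym e_irr Omega_sub far_dist2).
rewrite (big_setID (sq e j i)) /= (setIidPr sq_sub_far) lerD //.
  rewrite mulr_natl -sumr_const; apply: ler_sum => w wsq.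
  by rewrite far_ratio_ge ?(subsetP sq_sub_far) ?sqwit_le_gamma_max.
rewrite -sumr_const; apply: ler_sum => w /setDP[wfar wsq].
have sqwit0 : sqwit e j i w = set0 by apply/eqP; move: wsq; rewrite inE wfar negbK.
by have := @far_ratio_ge R w 0 wfar; rewrite sqwit0 cards0 addr0 invr1; apply.
Qed.

End Edge.

Theorem mainTheorem10 (R : realFieldType) (V : finType) (e : rel V)
  (e_sym : symmetric e) (e_irr : irreflexive e)
  (e_conn : forall x y : V, connect e x y)
  (i j : V) (hij : e i j) (hdeg : (deg e i <= deg e j)%N)
  (delta : R) (hd0 : 0 < delta)
  (hd1 : delta < (1 + (gamma_max e i j)%:R)^-1)
  (hRic : Ric e R i j <= -2 + delta) :
  let Omega := tri e i j :|: [set j] in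
  (#|Omega|%:R)^-1 * \sum_(k in Omega) betweenness e R k >= delta^-1.
Proof.
cbv zeta; set Omega := tri e i j :|: [set j]; set G : R := (gamma_max e i j)%:R.
have G_ge0 : 0 <= G by rewrite ler0n.
have dG : delta * (1 + G) < 1 by rewrite -ltr_pdivlMr ?div1r // ltr_pwDl.
have ndeg1 : deg e i != 1%N.
  apply: contraTneq hRic => deg1; rewrite /Ric (minn_idPl hdeg) deg1 eqxx -ltNge; nra.
have Dj_gt0 : 0 < (deg e j)%:R :> R.
  by rewrite ltr0n card_gt0; apply/set0Pn; exists i; rewrite inE e_sym.
have curv := le_trans (Ric_ge e_sym R hdeg ndeg1) hRic.
rewrite lerBlDr addrAC addNr add0r ler_pdivrMr // in curv.
rewrite (deg_split e_sym e_irr hij) !natrD in curv.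
have XG : 0 < #|sq e j i|%:R :> R -> 1 <= G by rewrite ltr0n /G ler1n card_gt0; apply: gamma_max_gt0.
have := budget_bound hd0 dG G_ge0 XG (ler0n _ _) (ler0n _ _) (ler0n _ _) curv.
move/le_trans/(_ (ler_wpM2l (ltW hd0) (sum_betweenness_Omega_ge e_sym e_irr hij R))).
have card_Omega : #|Omega| = #|tri e i j|.+1 by rewrite /Omega setUC cardsU1 !inE e_irr andbF.
rewrite card_Omega -natr1 ler_pdivlMl ?ltr_pwDr // ler_pdivrMr //.
by rewrite mulrC.
Qed.
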